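(* Let $R$ be a ring with identity. The following are equivalent: (1) $R$ is von Neumann regular; (2) the matrix ring $\mathbb{M}_2(R)$ is SSP; (3) $\mathbb{M}_n(R)$ is SSP for some $n>1$; (4) $\mathbb{M}_n(R)$ is SSP for every $n>1$.
   Context: Rings are associative with identity. $\mathbb{M}_n(R)$ is the ring of $n\times n$ matrices over $R$. A ring $R$ is von Neumann regular if for every $a\in R$ there is $b\in R$ with $a=aba$. A ring $S$ is right SSP if the sum of any two direct summands of $S_S$ is again a direct summand of $S_S$; left SSP analogously with ${}_SS$; $S$ is SSP if it is both right and left SSP. *)

From mathcomp Require Import all_boot all_order all_algebra.
Set Implicit Arguments. Unset Strict Implicit. Unset Printing Implicit Defensive.
Import GRing.Theory.
Local Open Scope ring_scope.

(* Rings are associative with identity: R : pzRingType (zero ring allowed). *)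

Definition vN_regular (R : pzRingType) : Prop :=
  forall a : R, exists b : R, a = a * b * a.

(* Submodules of the regular right module S_S = right ideals (as sets). *)
Definition right_ideal (S : pzRingType) (I : S -> Prop) : Prop :=
  [/\ I 0, (forall x y, I x -> I y -> I (x + y)) & (forall x r, I x -> I (x * r))].

(* Submodules of the regular left module _S S = left ideals. *)
Definition left_ideal (S : pzRingType) (I : S -> Prop) : Prop :=
  [/\ I 0, (forall x y, I x -> I y -> I (x + y)) & (forall x r, I x -> I (r * x))].

Definition sum_sub (S : pzRingType) (I J : S -> Prop) : S -> Prop :=
  fun s => exists a b, [/\ I a, J b & s = a + b].

Definition summand_of (S : pzRingType) (sub : (S -> Prop) -> Prop) (I : S -> Prop)
  : Prop :=
  sub I /\ exists J, [/\ sub J, (forall x, I x -> J x -> x = 0)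
                      & (forall s, sum_sub I J s)].

Definition right_summand (S : pzRingType) := summand_of (@right_ideal S).
Definition left_summand (S : pzRingType) := summand_of (@left_ideal S).

Definition right_SSP (S : pzRingType) : Prop :=
  forall I J : S -> Prop, right_summand I -> right_summand J ->
    right_summand (sum_sub I J).

Definition left_SSP (S : pzRingType) : Prop :=
  forall I J : S -> Prop, left_summand I -> left_summand J ->
    left_summand (sum_sub I J).

Definition SSP (S : pzRingType) : Prop := right_SSP S /\ left_SSP S.

From mathcomp Require Import all_boot all_order all_algebra.
Set Implicit Arguments. Unset Strict Implicit. Unset Printing Implicit Defensive.
Import GRing.Theory.
Local Open Scope ring_scope.

(* The direct summands of S_S are the principal right ideals eS with e idempotent. In a
   regular ring, eS + gS = hS for the idempotent h = e + x y (1 - e), where x = (1 - e) g and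
   x y x = x; applied to the opposite ring this gives left SSP as well. Regularity passes to
   rectangular matrices by induction on the size, since A is regular as soon as A - A Y A is
   for some Y. Conversely, if M_n(R) (n > 1) is right SSP, take e = 1 - E_11 and
   f = E_00 + a E_10: the summand eS + fS contains a E_10 and has a left unit e s1 + f s2,
   and comparing (1,0) entries gives a = a (s2)_01 a. *)

Section Summands.
Variable S : pzRingType.

Definition rprincipal (e : S) : S -> Prop := fun x => exists s, x = e * s.

Lemma rprincipal_right_ideal (e : S) : right_ideal (rprincipal e).
Proof.
split.
- by exists 0; rewrite mulr0.
- by move=> _ _ [s ->] [t ->]; exists (s + t); rewrite mulrDr.
- by move=> _ r [s ->]; exists (s * r); rewrite mulrA.
Qed.

Lemma sum_sub_ext (I I' J J' : S -> Prop) :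
  (forall x, I x <-> I' x) -> (forall x, J x <-> J' x) ->
  forall x, sum_sub I J x <-> sum_sub I' J' x.
Proof.
by move=> EI EJ x; split=> -[a [b [/EI Ia /EJ Jb ->]]]; exists a, b.
Qed.

(* Splitting 1 = e + f along I (+) J, the component e generates I. *)
Lemma right_summandP (I : S -> Prop) : right_summand I ->
  exists2 e : S, e * e = e & forall x, I x <-> rprincipal e x.
Proof.
case=> HI [J [[_ _ JM] IJ0 IJ]]; case: HI => _ IB IM.
have [e [f [Ie Jf E1]]] := IJ 1.
have eK x : I x -> e * x = x.
  move=> Ix; have fxJ : J (f * x) := JM _ _ Jf.
  have fxI : I (f * x).
    have -> : f * x = x + e * x * (- 1).
      by rewrite mulrN1 -{2}(mul1r x) E1 mulrDl addrC addKr.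
    by apply: (IB) => //; apply: (IM); apply: (IM).
  by rewrite -[x in RHS]mul1r E1 mulrDl (IJ0 _ fxI fxJ) addr0.
exists e; first exact: eK.
move=> x; split=> [Ix|[s ->]]; last exact: IM.
by exists x; rewrite eK.
Qed.

Lemma idem_right_summand (e : S) (K : S -> Prop) : e * e = e ->
  (forall x, K x <-> rprincipal e x) -> right_summand K.
Proof.
move=> ee EK.
have [K0 KB KM] := rprincipal_right_ideal e.
split.
  by split=> [|x y|x r]; [apply/EK | move=> /EK Kx /EK Ky; apply/EK; exact: KB
                         | move=> /EK Kx; apply/EK; exact: KM].
exists (rprincipal (1 - e)); split; first exact: rprincipal_right_ideal.
- move=> _ /EK [s ->] [t est].
  by rewrite -ee -mulrA est mulrA mulrBr mulr1 ee subrr mul0r.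
- move=> s; exists (e * s), ((1 - e) * s); split; last by rewrite -mulrDl addrC subrK mul1r.
  + by apply/EK; exists s.
  + by exists s.
Qed.

Lemma right_summand_sum_left_unit (e f : S) :
  right_summand (sum_sub (rprincipal e) (rprincipal f)) ->
  exists s1 s2, forall m, sum_sub (rprincipal e) (rprincipal f) m ->
    m = (e * s1 + f * s2) * m.
Proof.
case/right_summandP=> h hh Eh.
have [_ [_ [[s1 ->] [s2 ->] Eh12]]] := proj2 (Eh h) (ex_intro _ 1 (esym (mulr1 h))).
exists s1, s2 => m /Eh [s ->].
by rewrite -Eh12 mulrA hh.
Qed.

Section IdempotentJoin.
Variables e g y : S.
Hypothesis ee : e * e = e.
Let x := (1 - e) * g.
Hypothesis xyx : x * y * x = x.

Definition idem_join := e + x * y * (1 - e).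

Let ex : e * x = 0.
Proof. by rewrite /x mulrA mulrBr mulr1 ee subrr mul0r. Qed.

Let eBx : (1 - e) * x = x.
Proof. by rewrite mulrBl mul1r ex subr0. Qed.

Let hx : idem_join * x = x.
Proof. by rewrite mulrDl ex add0r -(mulrA (x * y)) eBx xyx. Qed.

Lemma idem_join_mulr_idem : idem_join * e = e.
Proof. by rewrite mulrDl -(mulrA (x * y)) mulrBl mul1r ee subrr mulr0 addr0. Qed.

Lemma idem_join_mulr_gen : idem_join * g = g.
Proof.
have -> : g = e * g + x by rewrite /x mulrBl mul1r addrC subrK.
by rewrite mulrDr mulrA idem_join_mulr_idem hx.
Qed.

Lemma idem_joinK : idem_join * idem_join = idem_join.
Proof. by rewrite {2}/idem_join mulrDr idem_join_mulr_idem 2!(mulrA idem_join) hx. Qed.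

Lemma idem_joinE : idem_join = e * (1 - g * y * (1 - e)) + g * (y * (1 - e)).
Proof.
rewrite /idem_join /x !(mulrBr, mulrBl, mulr1, mul1r, mulrA) -[RHS]addrA !opprB.
by congr (_ + _); rewrite addrACA [RHS]addrACA (addrC (g * y)).
Qed.

End IdempotentJoin.

Lemma rprincipal_sum (e g y : S) :
  e * e = e -> (1 - e) * g * y * ((1 - e) * g) = (1 - e) * g ->
  forall z, sum_sub (rprincipal e) (rprincipal g) z <-> rprincipal (idem_join e g y) z.
Proof.
move=> ee xyx z; split.
- case=> _ [_ [[s1 ->] [s2 ->] ->]]; exists (e * s1 + g * s2).
  by rewrite mulrDr !mulrA idem_join_mulr_idem // idem_join_mulr_gen.
- case=> s ->; exists (e * ((1 - g * y * (1 - e)) * s)), (g * (y * (1 - e) * s)).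
  by split; [eexists | eexists | rewrite idem_joinE // mulrDl !mulrA].
Qed.

Lemma regular_right_SSP : vN_regular S -> right_SSP S.
Proof.
move=> reg I J /right_summandP [e ee EI] /right_summandP [g _ EJ].
have [y xyx] := reg ((1 - e) * g).
apply: (idem_right_summand (idem_joinK ee (esym xyx))) => z.
exact: iff_trans (sum_sub_ext EI EJ z) (rprincipal_sum ee (esym xyx) z).
Qed.

End Summands.

Lemma vN_regular_conv (S : pzRingType) : vN_regular S -> vN_regular S^c.
Proof. by move=> reg a; have [b E] := reg a; exists b; rewrite /= -mulrA. Qed.

(* Right ideals of [S^c] are the left ideals of [S]. *)
Lemma regular_SSP (S : pzRingType) : vN_regular S -> SSP S.
Proof.
move=> reg; split; first exact: regular_right_SSP.
exact: regular_right_SSP (vN_regular_conv reg).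
Qed.

Section RegularMatrices.
Variable R : pzRingType.
Hypothesis reg : vN_regular R.

Definition mx_regular m n (A : 'M[R]_(m, n)) : Prop := exists G : 'M_(n, m), A *m G *m A = A.

(* If [A - A Y A] has inner inverse [G], then [Y + (1 - Y A) G (1 - A Y)] is one of [A]. *)
Lemma mx_regular_residue m n (A : 'M[R]_(m, n)) (Y : 'M_(n, m)) :
  mx_regular (A - A *m Y *m A) -> mx_regular A.
Proof.
case=> G AG.
exists (Y + (1%:M - Y *m A) *m G *m (1%:M - A *m Y)).
have AYA_l : A *m (1%:M - Y *m A) = A - A *m Y *m A by rewrite mulmxBr mulmx1 mulmxA.
have AYA_r : (1%:M - A *m Y) *m A = A - A *m Y *m A by rewrite mulmxBl mul1mx.
rewrite mulmxDr mulmxDl !mulmxA AYA_l -!mulmxA AYA_r !mulmxA AG.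
by rewrite addrC subrK.
Qed.

Lemma mx_regular11 (M : 'M[R]_1) : mx_regular M.
Proof.
have [r Mr] := reg (M ord0 ord0).
exists r%:M; apply/matrixP => i j; rewrite !ord1 !mxE big_ord1 !mxE big_ord1 mxE.
by rewrite eqxx mulr1n -Mr.
Qed.

Lemma mx_regular_col m (c : 'cV[R]_m) : mx_regular c.
Proof.
elim: m c => [|m IH] c; first by exists 0; rewrite [LHS]flatmx0 [RHS]flatmx0.
have Dc := vsubmxK (c : 'M_(1 + m, 1)).
set x := usubmx _ in Dc; set c' := dsubmx _ in Dc.
have [g' c'g'] := IH c'.
change (mx_regular (c : 'M_(1 + m, 1))); apply: (@mx_regular_residue _ _ _ (row_mx 0 g')).
rewrite -Dc -mulmxA mul_row_col mul0mx add0r mul_col_mx !mulmxA c'g'.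
rewrite opp_col_mx add_col_mx subrr.
have [gx xgx] := mx_regular11 (x - x *m g' *m c').
exists (row_mx gx 0).
by rewrite -mulmxA mul_row_col mulmx0 addr0 mul_col_mx mul0mx !mulmxA xgx.
Qed.

Lemma mx_regular_all m n (A : 'M[R]_(m, n)) : mx_regular A.
Proof.
elim: n m A => [|n IH] m A; first by exists 0; rewrite [LHS]thinmx0 [RHS]thinmx0.
have DA := hsubmxK (A : 'M_(m, 1 + n)).
set a := lsubmx _ in DA; set B := rsubmx _ in DA.
have [H BH] := IH _ B.
change (mx_regular (A : 'M_(m, 1 + n))); apply: (@mx_regular_residue _ _ _ (col_mx 0 H)).
rewrite -DA mul_row_col mulmx0 add0r mul_mx_row BH.
rewrite opp_row_mx add_row_mx subrr.
have [gc agc] := mx_regular_col (a - B *m H *m a).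
exists (col_mx gc 0).
by rewrite mul_row_col mul0mx addr0 mul_mx_row agc mulmx0.
Qed.

Lemma vN_regular_mx n : vN_regular 'M[R]_n.
Proof. by move=> A; have [G AG] := mx_regular_all A; exists G; rewrite -!mulmxE AG. Qed.

End RegularMatrices.

Section MatrixEntries.
Variable R : pzRingType.

Lemma mulmx_sparse_colE m n p (A : 'M[R]_(m, n)) (B : 'M_(n, p)) i j k :
  (forall k', k' != k -> B k' j = 0) -> (A *m B) i j = A i k * B k j.
Proof. by move=> Bj; rewrite mxE (bigD1 k) //= big1 ?addr0 // => k' /Bj ->; rewrite mulr0. Qed.

Lemma mulmx_sparse_rowE m n p (A : 'M[R]_(m, n)) (B : 'M_(n, p)) i j k :
  (forall k', k' != k -> A i k' = 0) -> (A *m B) i j = A i k * B k j.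
Proof. by move=> Ai; rewrite mxE (bigD1 k) //= big1 ?addr0 // => k' /Ai ->; rewrite mul0r. Qed.

(* Entries of [delta_mx] are [0] or [1], so they commute with scalars. *)
Lemma delta_mx_scalemxAr m n p (i : 'I_m) (j : 'I_n) a (B : 'M[R]_(n, p)) :
  delta_mx i j *m (a *: B) = a *: (delta_mx i j *m B).
Proof.
apply/matrixP=> r s; rewrite !mxE mulr_sumr; apply: eq_bigr => k _.
by rewrite !mxE !mulr_natl mulrnAr.
Qed.

End MatrixEntries.

Section RegularOfSSP.
Variables (R : pzRingType) (n : nat) (a : R).

Let i0 : 'I_n.+2 := ord0.
Let i1 : 'I_n.+2 := Ordinal (isT : (1 < n.+2)%N).
Let E (i j : 'I_n.+2) : 'M[R]_n.+2 := delta_mx i j.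

(* [eS] consists of the matrices with zero row [i1]; [fS] of those whose row [i1] is [a] times
   row [i0] and whose other rows vanish. *)
Let e := 1 - E i1 i1.
Let f := E i0 i0 + a *: E i1 i0.
Let m := a *: E i1 i0.

Let e_idem : e * e = e.
Proof.
have EE : E i1 i1 * E i1 i1 = E i1 i1 := mul_delta_mx _ _ _.
by rewrite mulrBl mul1r mulrBr mulr1 EE subrr subr0.
Qed.

Let f_idem : f * f = f.
Proof.
have E00 : E i0 i0 * E i0 i0 = E i0 i0 := mul_delta_mx _ _ _.
have E10 : E i1 i0 * E i0 i0 = E i1 i0 := mul_delta_mx _ _ _.
have E_0 k : E k i0 * (a *: E i1 i0) = 0.
  by rewrite -mulmxE delta_mx_scalemxAr mul_delta_mx_0 ?scaler0.
by rewrite mulrDl !mulrDr E_0 -!mulmxE -!scalemxAl !mulmxE E00 E10 E_0 scaler0 !addr0.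
Qed.

Let m_sum : sum_sub (rprincipal e) (rprincipal f) m.
Proof.
exists (e * - E i0 i0), (f * E i0 i0); split; [by eexists | by eexists |].
have eE : e * E i0 i0 = E i0 i0.
  by rewrite mulrBl mul1r -mulmxE mul_delta_mx_0 ?subr0.
have fE : f * E i0 i0 = f.
  by rewrite mulrDl -!mulmxE -scalemxAl !mul_delta_mx.
by rewrite mulrN eE fE addKr.
Qed.

Let sum_unit_entry s1 s2 : ((e * s1 + f * s2) * m) i1 i0 = a * s2 i0 i1 * a.
Proof.
have i10 : (i1 == i0) = false by [].
rewrite -mulmxE (mulmx_sparse_colE _ _ (k := i1)); last first.
  by move=> k /negPf k1; rewrite !mxE k1 mulr0.
rewrite mxE (mulmx_sparse_rowE _ _ (k := i1)) ?(mulmx_sparse_rowE _ _ (k := i0)).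
- by rewrite !mxE !eqxx i10 /= subrr mul0r add0r mulr1 add0r.
- by move=> k /negPf k0; rewrite !mxE i10 !eqxx k0 /= mulr0 addr0.
- by move=> k k1; rewrite !mxE (eq_sym i1) (negPf k1) andbF subrr.
Qed.

Lemma right_SSP_regular_mx : right_SSP 'M[R]_n.+2 -> exists b, a = a * b * a.
Proof.
move=> SSP.
have eS := idem_right_summand e_idem (fun=> iff_refl _).
have fS := idem_right_summand f_idem (fun=> iff_refl _).
have [s1 [s2 unit]] := right_summand_sum_left_unit (SSP _ _ eS fS).
exists (s2 i0 i1).
by rewrite -(sum_unit_entry s1) -unit // /m /E !mxE !eqxx mulr1.
Qed.

End RegularOfSSP.

Theorem theorem2p14 (R : pzRingType) :
  [<-> vN_regular R;
       SSP 'M[R]_2;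
       exists n : nat, (1 < n)%N /\ SSP 'M[R]_n;
       forall n : nat, (1 < n)%N -> SSP 'M[R]_n].
Proof.
have SSP_mx reg n : SSP 'M[R]_n := regular_SSP (vN_regular_mx (n := n) reg).
have regular_of_SSP n : (1 < n)%N -> SSP 'M[R]_n -> vN_regular R.
  by case: n => [|[|n]] // _ [SSPr _] a; exact: right_SSP_regular_mx SSPr.
tfae.
- by move=> reg; exact: SSP_mx.
- by move=> SSP2; exists 2%N.
- by case=> n [n_gt1 /(regular_of_SSP n n_gt1) reg] k _; exact: SSP_mx.
- by move=> SSPn; exact: regular_of_SSP (SSPn 2%N isT).
Qed.
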